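(* Using the principal branch of the square root, for $|z|<\ln 2$, \[ \sqrt{2e^{-z}-1}=\sum_{n=0}^{\infty}(-1)^{n+1}\Bigg[\sum_{k=0}^{n}(-1)^kS(n,k)(2k-3)!!\Bigg]\frac{z^n}{n!}, \] where $S(n,k)$ are the Stirling numbers of the second kind.
   Context: $S(n,k)$ is defined by $\frac{(e^x-1)^k}{k!}=\sum_{n\ge k}S(n,k)\frac{x^n}{n!}$, so $S(0,0)=1$ and $S(n,0)=0$ for $n\ge1$. Double factorials: $(2j-1)!!=1\cdot3\cdots(2j-1)$ for $j\ge1$. For negative odd integers, $[-(2k+1)]!!=\frac{(-1)^k}{(2k-1)!!}$ for $k\ge0$, so $(-1)!!=1$ and $(-3)!!=-1$. *)

From Stdlib Require Import Reals ZArith.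
From Coquelicot Require Import Coquelicot.
Open Scope R_scope.

Fixpoint stirling2 (n k : nat) : nat :=
  match n, k with
  | O, O => 1%nat
  | O, S _ => 0%nat
  | S _, O => 0%nat
  | S n', S k' => ((S k') * stirling2 n' (S k') + stirling2 n' k')%nat
  end.

(* (2j-1)!! = 1*3*...*(2j-1), with (-1)!! = 1 for j = 0 (empty product). *)
Fixpoint odd_dfact (j : nat) : R :=
  match j with
  | O => 1
  | S j' => INR (2 * j' + 1) * odd_dfact j'
  end.

(* Double factorial of an odd integer m (value irrelevant for even m):
   m = 2j-1 >= -1  gives (2j-1)!!,
   m = -(2k+1) gives (-1)^k / (2k-1)!!   (so (-1)!! = 1, (-3)!! = -1). *)
Definition dfact_odd (m : Z) : R :=
  if (0 <=? m)%Z then odd_dfact (Z.to_nat ((m + 1) / 2))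
  else let k := Z.to_nat ((- m - 1) / 2) in (-1) ^ k / odd_dfact k.

Definition Cexp (z : C) : C := (exp (Re z) * cos (Im z), exp (Re z) * sin (Im z)).

(* Principal branch of the square root: for w = a + ib,
   sqrt w = sqrt((|w|+a)/2) + i sgn(b) sqrt((|w|-a)/2), with sgn(b) = 1 for b >= 0,
   -1 for b < 0; i.e. Re >= 0, and Im >= 0 when Re = 0 (argument in (-pi/2, pi/2]). *)
Definition Csqrt (w : C) : C :=
  (sqrt ((Cmod w + Re w) / 2),
   (if Rle_dec 0 (Im w) then 1 else -1) * sqrt ((Cmod w - Re w) / 2)).

Definition coef3p3 (n : nat) : R :=
  (-1) ^ (n + 1) *
  sum_f_R0 (fun k => (-1) ^ k * INR (stirling2 n k) * dfact_odd (2 * Z.of_nat k - 3)%Z) n.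

From Stdlib Require Import Reals ZArith Lra Lia.
From Coquelicot Require Import Coquelicot.
Open Scope R_scope.

(* With v = e^z / 2 we have 2 e^(-z) - 1 = 2 e^(-z) (1 - v), so
   G(z) = sqrt 2 e^(-z/2) sqrt (1 - v) = sum_k p_k e^((k - 1/2) z),  p_k = sqrt 2 a_k / 2^k,
   where sum_k a_k v^k is the binomial series of sqrt (1 - v); for |z| < ln 2 one has
   |v| < 1 and Re G > 0, so G is the principal root.  Expanding every exponential and
   exchanging the absolutely convergent double sum, the coefficient of z^n / n! is
   d_n = sum_k p_k (k - 1/2)^n.  Writing (k - 1/2)^n = (-1)^n sum_j S(n,j) (1/2 - k)_j with
   falling factorials reduces d_n to E_j = sum_k p_k (1/2 - k)_j.  The recurrence
   (1/2 - k) p_k = -2 (k + 1) p_(k+1) gives E_(j+1) = (1 - 2j) E_j by summation by parts,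
   and E_0 = G(0) = 1, whence E_j = (-1)^(j+1) (2j - 3)!!. *)

(** * Real series *)

Lemma ex_series_Rabs_le (a b : nat -> R) :
  (forall n, Rabs (a n) <= b n) -> ex_series b -> ex_series (fun n => Rabs (a n)).
Proof.
  intros Hab. apply (ex_series_le (V := R_CompleteNormedModule)). intros n.
  change (norm (Rabs (a n))) with (Rabs (Rabs (a n))). now rewrite Rabs_Rabsolu.
Qed.

Lemma ex_series_Rle (a b : nat -> R) :
  (forall n, Rabs (a n) <= b n) -> ex_series b -> ex_series a.
Proof. intros Hab Hb. apply ex_series_Rabs, (ex_series_Rabs_le _ b Hab Hb). Qed.

Lemma is_series_partial_sums (a : nat -> R) (l : R) :
  is_series a l <-> is_lim_seq (sum_f_R0 a) l.
Proof. rewrite is_series_Reals, is_lim_seq_Reals. reflexivity. Qed.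

Lemma Series_split (a : nat -> R) (N : nat) : ex_series a ->
  Series a = sum_f_R0 a N + Series (fun k => a (S N + k)%nat).
Proof. intros Ea. apply (Series_incr_n a (S N)); [lia | exact Ea]. Qed.

Lemma Rabs_Series_le (a b : nat -> R) :
  (forall n, Rabs (a n) <= b n) -> ex_series b -> Rabs (Series a) <= Series b.
Proof.
  intros Hab Eb.
  eapply Rle_trans; [apply Series_Rabs, (ex_series_Rabs_le _ _ Hab Eb)|].
  apply Series_le; [|exact Eb]. intros n. split; [apply Rabs_pos | apply Hab].
Qed.

Lemma Series_tail_Rabs_le (a b : nat -> R) (M : R) (N : nat) :
  (forall n, Rabs (a n) <= b n) -> is_series b M ->
  Rabs (Series a - sum_f_R0 a N) <= M - sum_f_R0 b N.
Proof.
  intros Hab HM.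
  assert (Eb : ex_series b) by (exists M; exact HM).
  assert (Ea : ex_series a) by apply (ex_series_Rle _ _ Hab Eb).
  rewrite <- (is_series_unique _ _ HM), (Series_split a N Ea), (Series_split b N Eb).
  replace (sum_f_R0 a N + Series (fun k => a (S N + k)%nat) - sum_f_R0 a N)
    with (Series (fun k => a (S N + k)%nat)) by ring.
  replace (sum_f_R0 b N + Series (fun k => b (S N + k)%nat) - sum_f_R0 b N)
    with (Series (fun k => b (S N + k)%nat)) by ring.
  apply Rabs_Series_le; [intros k; apply Hab | apply ex_series_incr_n, Eb].
Qed.

Lemma is_series_partial_le (b : nat -> R) (M : R) (N : nat) :
  (forall n, 0 <= b n) -> is_series b M -> sum_f_R0 b N <= M.
Proof.
  intros Hb HM.
  assert (Hbb : forall n, Rabs (b n) <= b n)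
    by (intros n; rewrite Rabs_right; [lra | apply Rle_ge, Hb]).
  pose proof (Series_tail_Rabs_le b b M N Hbb HM).
  pose proof (Rabs_pos (Series b - sum_f_R0 b N)). lra.
Qed.

Lemma is_lim_seq_Rabs_bound (u e : nat -> R) (l : R) :
  (forall N, Rabs (u N - l) <= e N) -> is_lim_seq e 0 -> is_lim_seq u l.
Proof.
  intros Hue He. apply is_lim_seq_Reals. intros eps Heps.
  destruct (proj1 (is_lim_seq_Reals _ _) He eps Heps) as [N HN].
  exists N. intros n Hn. specialize (HN n Hn). unfold R_dist in *. rewrite Rminus_0_r in HN.
  pose proof (Hue n). pose proof (Rle_abs (e n)). lra.
Qed.

Lemma is_lim_seq_sum_f_R0 (u : nat -> nat -> R) (l : nat -> R) (K : nat) :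
  (forall k, is_lim_seq (fun N => u N k) (l k)) ->
  is_lim_seq (fun N => sum_f_R0 (u N) K) (sum_f_R0 l K).
Proof.
  intros Hu. induction K as [|K IH]; [apply Hu|].
  apply (is_lim_seq_plus' _ _ _ _ IH (Hu (S K))).
Qed.

Lemma is_lim_seq_Series_tail (M : nat -> R) : ex_series M ->
  is_lim_seq (fun K => Series (fun k => M (S K + k)%nat)) 0.
Proof.
  intros EM.
  apply (is_lim_seq_ext (fun K => Series M - sum_f_R0 M K)).
  { intros K. rewrite (Series_split M K EM). ring. }
  replace (Finite 0) with (Rbar_minus (Series M) (Series M)) by (simpl; f_equal; ring).
  apply is_lim_seq_minus'; [apply is_lim_seq_const|].
  apply is_series_partial_sums, Series_correct, EM.
Qed.

Lemma is_lim_seq_Series_dominated (t : nat -> nat -> R) (M : nat -> R) :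
  (forall N k, 0 <= t N k <= M k) -> ex_series M ->
  (forall k, is_lim_seq (fun N => t N k) 0) ->
  is_lim_seq (fun N => Series (t N)) 0.
Proof.
  intros Hb EM Ht.
  assert (Et : forall N, ex_series (t N)).
  { intros N. apply (ex_series_Rle _ M); [|exact EM].
    intros k. rewrite Rabs_right; [apply Hb | apply Rle_ge, Hb]. }
  apply is_lim_seq_Reals. intros eps Heps.
  destruct (proj1 (is_lim_seq_Reals _ _) (is_lim_seq_Series_tail M EM) (eps / 2))
    as [K HK]; [lra|].
  specialize (HK K (le_n K)). unfold R_dist in HK. rewrite Rminus_0_r in HK.
  pose proof (is_lim_seq_sum_f_R0 t (fun _ => 0) K Ht) as Hfin.
  rewrite sum_cte, Rmult_0_l in Hfin.
  destruct (proj1 (is_lim_seq_Reals _ _) Hfin (eps / 2)) as [N0 HN0]; [lra|].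
  exists N0. intros N HN. specialize (HN0 N HN). unfold R_dist in *.
  rewrite Rminus_0_r in *.
  assert (Htail : Series (fun k => t N (S K + k)%nat) <= Series (fun k => M (S K + k)%nat)).
  { apply Series_le; [intros k; apply Hb | apply ex_series_incr_n, EM]. }
  assert (Habs : Rabs (Series (t N)) <= Series (t N)).
  { eapply Rle_trans; [apply Series_Rabs|].
    - apply (ex_series_Rabs_le _ M); [|exact EM].
      intros k. rewrite Rabs_right; [apply Hb | apply Rle_ge, Hb].
    - right. apply Series_ext. intros k. apply Rabs_right, Rle_ge, Hb. }
  rewrite (Series_split (t N) K (Et N)) in *.
  pose proof (Rle_abs (Series (fun k => M (S K + k)%nat))).
  pose proof (Rle_abs (sum_f_R0 (t N) K)).
  lra.
Qed.

Lemma is_series_sum_f_R0 (f : nat -> nat -> R) (l : nat -> R) (N : nat) :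
  (forall n, is_series (f n) (l n)) ->
  is_series (fun k => sum_f_R0 (fun n => f n k) N) (sum_f_R0 l N).
Proof.
  intros Hf. induction N as [|N IH]; [apply Hf|].
  apply (is_series_plus _ _ _ _ IH (Hf (S N))).
Qed.

Lemma is_series_interchange (a b : nat -> nat -> R) (M c : nat -> R) :
  (forall k n, Rabs (a k n) <= b k n) ->
  (forall k, is_series (b k) (M k)) -> ex_series M ->
  (forall n, is_series (fun k => a k n) (c n)) ->
  is_series c (Series (fun k => Series (a k))).
Proof.
  intros Hab Hb EM Hc.
  assert (Hb0 : forall k n, 0 <= b k n)
    by (intros k n; eapply Rle_trans; [apply Rabs_pos | apply Hab]).
  set (t := fun N k => M k - sum_f_R0 (b k) N).
  assert (Ht : forall N k, Rabs (Series (a k) - sum_f_R0 (a k) N) <= t N k)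
    by (intros N k; apply Series_tail_Rabs_le; [apply Hab | apply Hb]).
  assert (HtM : forall N k, 0 <= t N k <= M k).
  { intros N k. split; [eapply Rle_trans; [apply Rabs_pos | apply Ht]|].
    unfold t. pose proof (cond_pos_sum (b k) N (Hb0 k)). lra. }
  assert (Ht0 : forall k, is_lim_seq (fun N => t N k) 0).
  { intros k. replace (Finite 0) with (Rbar_minus (M k) (M k)) by (simpl; f_equal; ring).
    apply is_lim_seq_minus'; [apply is_lim_seq_const | apply is_series_partial_sums, Hb]. }
  set (L := Series (fun k => Series (a k))).
  assert (HL : is_series (fun k => Series (a k)) L).
  { apply Series_correct, (ex_series_Rle _ M); [|exact EM]. intros k.
    rewrite <- (is_series_unique _ _ (Hb k)).
    apply Rabs_Series_le; [apply Hab | exists (M k); apply Hb]. }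
  assert (Hrem : forall N, L - sum_f_R0 c N = Series (fun k => Series (a k) - sum_f_R0 (a k) N)).
  { intros N. symmetry. apply is_series_unique.
    apply (is_series_minus _ _ _ _ HL (is_series_sum_f_R0 (fun n k => a k n) c N Hc)). }
  apply is_series_partial_sums, (is_lim_seq_Rabs_bound _ (fun N => Series (t N)));
    [| apply (is_lim_seq_Series_dominated t M HtM EM Ht0)].
  intros N. rewrite Rabs_minus_sym, Hrem.
  apply Rabs_Series_le; [apply Ht|].
  apply (ex_series_Rle _ M); [|exact EM].
  intros k. rewrite Rabs_right; [apply HtM | apply Rle_ge, HtM].
Qed.

Lemma filterlim_div2 : filterlim Nat.div2 eventually eventually.
Proof.
  intros P [N HN]. exists (2 * N)%nat. intros n Hn. apply HN.
  pose proof (Nat.div2_odd n). destruct (Nat.odd n); simpl in *; lia.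
Qed.

Lemma is_series_even (a : nat -> R) (l : R) :
  (forall m, a (2 * m + 1)%nat = 0) -> is_series (fun m => a (2 * m)%nat) l -> is_series a l.
Proof.
  intros Hodd Hl. set (b := fun m => a (2 * m)%nat) in Hl.
  assert (Hpair : forall m, sum_f_R0 a (2 * m) = sum_f_R0 b m /\
                            sum_f_R0 a (2 * m + 1) = sum_f_R0 b m).
  { induction m as [|m [IHe IHo]].
    - pose proof (Hodd 0%nat) as H1. unfold b. simpl in *. split; lra.
    - split.
      + replace (2 * S m)%nat with (S (2 * m + 1)) by lia.
        rewrite !tech5, IHo. unfold b. do 2 f_equal. lia.
      + replace (2 * S m + 1)%nat with (S (S (2 * m + 1))) by lia.
        rewrite !tech5, IHo. unfold b.
        replace (S (S (2 * m + 1))) with (2 * S m + 1)%nat by lia.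
        replace (S (2 * m + 1)) with (2 * S m)%nat by lia.
        rewrite Hodd. ring. }
  apply is_series_partial_sums.
  apply (is_lim_seq_ext (fun n => sum_f_R0 b (Nat.div2 n))).
  - intros n. pose proof (Nat.div2_odd n) as Hn.
    destruct (Nat.odd n); simpl Nat.b2n in Hn; rewrite Hn at 2; symmetry.
    + apply Hpair.
    + rewrite Nat.add_0_r. apply Hpair.
  - apply (is_lim_seq_subseq _ _ _ filterlim_div2), is_series_partial_sums, Hl.
Qed.

Lemma is_series_odd (a : nat -> R) (l : R) :
  (forall m, a (2 * m)%nat = 0) -> is_series (fun m => a (2 * m + 1)%nat) l -> is_series a l.
Proof.
  intros Heven Hl. apply is_series_decr_1.
  change (plus l (opp (a 0%nat))) with (l - a (2 * 0)%nat).
  rewrite Heven, Rminus_0_r.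
  apply is_series_even.
  - intros m. replace (S (2 * m + 1)) with (2 * S m)%nat by lia. apply Heven.
  - eapply is_series_ext; [|exact Hl]. intros m. simpl. f_equal. lia.
Qed.

(** * Complex series *)

(* [ring] for equations in [C] that Coquelicot's generic lemmas state over the carriers
   of [C_Ring] or [C_NormedModule]. *)
Ltac C_ring :=
  match goal with |- ?x = ?y => change (@eq C x y) end;
  change mult with Cmult; change plus with Cplus; change scal with Cmult; ring.

Lemma Cmult_reg_l (c x y : C) : c <> RtoC 0 -> Cmult c x = Cmult c y -> x = y.
Proof.
  intros Hc E.
  replace x with (Cmult (Cinv c) (Cmult c x)) by (field; exact Hc).
  rewrite E. field. exact Hc.
Qed.

Lemma im_le_Cmod (c : C) : Rabs (Im c) <= Cmod c.
Proof.
  pose proof (Rmax_Cmod c). pose proof (Rmax_r (Rabs (fst c)) (Rabs (snd c))).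
  unfold Im. lra.
Qed.

Lemma Re_sum_n (a : nat -> C) (N : nat) : Re (sum_n a N) = sum_n (fun n => Re (a n)) N.
Proof.
  induction N as [|N IH]; [now rewrite !sum_O|].
  rewrite !sum_Sn, <- IH. reflexivity.
Qed.

Lemma Im_sum_n (a : nat -> C) (N : nat) : Im (sum_n a N) = sum_n (fun n => Im (a n)) N.
Proof.
  induction N as [|N IH]; [now rewrite !sum_O|].
  rewrite !sum_Sn, <- IH. reflexivity.
Qed.

Lemma is_series_Re (a : nat -> C) (l : C) :
  is_series a l -> is_series (fun n => Re (a n)) (Re l).
Proof.
  intros H. unfold is_series.
  apply (filterlim_ext (fun N => Re (sum_n a N))); [apply Re_sum_n|].
  eapply filterlim_comp; [exact H|]. destruct l. apply continuous_fst.
Qed.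

Lemma is_series_Im (a : nat -> C) (l : C) :
  is_series a l -> is_series (fun n => Im (a n)) (Im l).
Proof.
  intros H. unfold is_series.
  apply (filterlim_ext (fun N => Im (sum_n a N))); [apply Im_sum_n|].
  eapply filterlim_comp; [exact H|]. destruct l. apply continuous_snd.
Qed.

Lemma is_series_Re_Im (a : nat -> C) (l : C) :
  is_series (fun n => Re (a n)) (Re l) -> is_series (fun n => Im (a n)) (Im l) ->
  is_series a l.
Proof.
  unfold is_series. intros Hre Him.
  apply filterlim_locally. intros eps.
  generalize (filter_and _ _ (proj1 (filterlim_locally _ _) Hre eps)
                             (proj1 (filterlim_locally _ _) Him eps)).
  apply filter_imp. intros N [Bre Bim].
  rewrite <- Re_sum_n in Bre. rewrite <- Im_sum_n in Bim. now split.
Qed.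

Lemma is_series_RtoC (a : nat -> R) (l : R) :
  is_series a l -> is_series (fun n => RtoC (a n)) (RtoC l).
Proof.
  intros Hl. apply is_series_Re_Im; [exact Hl|].
  apply is_series_partial_sums. simpl.
  apply (is_lim_seq_ext (fun _ => 0)); [intros n; rewrite sum_cte; ring | apply is_lim_seq_const].
Qed.

Lemma is_series_C_unique (a : nat -> C) (l l' : C) : is_series a l -> is_series a l' -> l = l'.
Proof. apply filterlim_locally_unique. Qed.

Definition CSeries (a : nat -> C) : C := (Series (fun n => Re (a n)), Series (fun n => Im (a n))).

Lemma is_series_CSeries (a : nat -> C) :
  ex_series (fun n => Cmod (a n)) -> is_series a (CSeries a).
Proof.
  intros Ea. apply is_series_Re_Im; apply Series_correct, ex_series_Rabs.
  - apply (ex_series_Rabs_le _ _ (fun n => re_le_Cmod (a n)) Ea).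
  - apply (ex_series_Rabs_le _ _ (fun n => im_le_Cmod (a n)) Ea).
Qed.

Lemma sum_n_Sl {G : AbelianMonoid} (u : nat -> G) (n : nat) :
  sum_n u (S n) = plus (u 0%nat) (sum_n (fun k => u (S k)) n).
Proof.
  unfold sum_n. rewrite (sum_n_m_Chasles u 0 0 (S n)) by lia.
  now rewrite sum_n_n, sum_n_m_S.
Qed.

Lemma sum_n_Cmult_RtoC (f : nat -> R) (w : C) (n : nat) :
  sum_n (fun k => Cmult (RtoC (f k)) w) n = Cmult (RtoC (sum_f_R0 f n)) w.
Proof.
  induction n as [|n IH]; [now rewrite sum_O|].
  rewrite sum_Sn, IH. simpl sum_f_R0. rewrite RtoC_plus.
  apply injective_projections; simpl; ring.
Qed.

Lemma is_series_C_two_terms (a : nat -> C) :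
  (forall n, a (S (S n)) = RtoC 0) -> is_series a (Cplus (a 0%nat) (a 1%nat)).
Proof.
  intros Ha. unfold is_series.
  apply (filterlim_ext_loc (fun _ => Cplus (a 0%nat) (a 1%nat))); [|apply filterlim_const].
  exists 1%nat. intros N HN. induction N as [|N IH]; [lia|].
  destruct N as [|N]; [now rewrite sum_Sn, sum_O|].
  rewrite sum_Sn, <- IH, Ha by lia. apply injective_projections; simpl; ring.
Qed.

Lemma is_series_C_mult (a b : nat -> C) (A B : C) :
  is_series a A -> is_series b B ->
  ex_series (fun n => Cmod (a n)) -> ex_series (fun n => Cmod (b n)) ->
  is_series (fun n => sum_n (fun k => Cmult (a k) (b (n - k)%nat)) n) (Cmult A B).
Proof.
  intros HA HB EA EB.
  pose proof (is_series_Re _ _ HA) as HAre. pose proof (is_series_Im _ _ HA) as HAim.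
  pose proof (is_series_Re _ _ HB) as HBre. pose proof (is_series_Im _ _ HB) as HBim.
  pose proof (ex_series_Rabs_le _ _ (fun n => re_le_Cmod (a n)) EA) as EAre.
  pose proof (ex_series_Rabs_le _ _ (fun n => im_le_Cmod (a n)) EA) as EAim.
  pose proof (ex_series_Rabs_le _ _ (fun n => re_le_Cmod (b n)) EB) as EBre.
  pose proof (ex_series_Rabs_le _ _ (fun n => im_le_Cmod (b n)) EB) as EBim.
  apply is_series_Re_Im.
  - eapply is_series_ext; [|apply (is_series_minus _ _ _ _
      (is_series_mult _ _ _ _ HAre HBre EAre EBre)
      (is_series_mult _ _ _ _ HAim HBim EAim EBim))].
    intros n. rewrite Re_sum_n, sum_n_Reals. symmetry. apply minus_sum.
  - eapply is_series_ext; [|apply (is_series_plus _ _ _ _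
      (is_series_mult _ _ _ _ HAre HBim EAre EBim)
      (is_series_mult _ _ _ _ HAim HBre EAim EBre))].
    intros n. rewrite Im_sum_n, sum_n_Reals. symmetry. apply plus_sum.
Qed.

Lemma is_series_C_interchange (a : nat -> nat -> C) (b : nat -> nat -> R) (M : nat -> R)
    (A c : nat -> C) (L : C) :
  (forall k n, Cmod (a k n) <= b k n) ->
  (forall k, is_series (b k) (M k)) -> ex_series M ->
  (forall k, is_series (a k) (A k)) -> is_series A L ->
  (forall n, is_series (fun k => a k n) (c n)) ->
  is_series c L.
Proof.
  intros Hab Hb EM HA HL Hc. apply is_series_Re_Im.
  - replace (Re L) with (Series (fun k => Series (fun n => Re (a k n)))).
    + apply (is_series_interchange _ b M); [| exact Hb | exact EM |].
      * intros k n. eapply Rle_trans; [apply re_le_Cmod | apply Hab].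
      * intros n. apply is_series_Re, Hc.
    + rewrite (Series_ext _ (fun k => Re (A k)))
        by (intros k; apply is_series_unique, is_series_Re, HA).
      apply is_series_unique, is_series_Re, HL.
  - replace (Im L) with (Series (fun k => Series (fun n => Im (a k n)))).
    + apply (is_series_interchange _ b M); [| exact Hb | exact EM |].
      * intros k n. eapply Rle_trans; [apply im_le_Cmod | apply Hab].
      * intros n. apply is_series_Im, Hc.
    + rewrite (Series_ext _ (fun k => Im (A k)))
        by (intros k; apply is_series_unique, is_series_Im, HA).
      apply is_series_unique, is_series_Im, HL.
Qed.

(** * The exponential function *)

Lemma exp_series (x : R) : is_series (fun n => x ^ n / INR (fact n)) (exp x).
Proof.
  eapply is_series_ext; [|apply (is_exp_Reals x)]. intros n. simpl.
  rewrite pow_n_pow. change scal with Rmult. simpl. unfold Rdiv. ring.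
Qed.

Lemma exp_term_nonneg (x : R) (n : nat) : 0 <= x -> 0 <= x ^ n / INR (fact n).
Proof.
  intros Hx. apply Rmult_le_pos; [apply pow_le, Hx | left; apply Rinv_0_lt_compat, INR_fact_lt_0].
Qed.

Lemma exp_term_le (x : R) (n : nat) : 0 <= x -> x ^ n / INR (fact n) <= exp x.
Proof.
  intros Hx. eapply Rle_trans;
    [|apply (is_series_partial_le _ _ n (fun k => exp_term_nonneg x k Hx) (exp_series x))].
  destruct n as [|n]; [simpl; lra|].
  simpl. pose proof (cond_pos_sum _ n (fun k => exp_term_nonneg x k Hx)). lra.
Qed.

Lemma exp_ge_quadratic (x : R) : 0 <= x -> 1 + x + x ^ 2 / 2 <= exp x.
Proof.
  intros Hx.
  pose proof (is_series_partial_le _ _ 2 (fun k => exp_term_nonneg x k Hx) (exp_series x)) as H.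
  simpl in H. lra.
Qed.

Lemma pow_le_exp (x : R) (m : nat) : 0 <= x -> x ^ m <= 2 ^ m * INR (fact m) * exp (x / 2).
Proof.
  intros Hx. pose proof (exp_term_le (x / 2) m ltac:(lra)) as H.
  pose proof (INR_fact_lt_0 m). pose proof (pow_lt 2 m ltac:(lra)).
  replace (x ^ m) with (2 ^ m * INR (fact m) * ((x / 2) ^ m / INR (fact m))).
  - apply Rmult_le_compat_l; [apply Rmult_le_pos; lra | exact H].
  - unfold Rdiv. rewrite Rpow_mult_distr, pow_inv. field. lra.
Qed.

Lemma exp_mult_INR (a : R) (k : nat) : exp (INR k * a) = exp a ^ k.
Proof.
  induction k as [|k IH]; [simpl; now rewrite Rmult_0_l, exp_0|].
  rewrite S_INR, Rmult_plus_distr_r, Rmult_1_l, exp_plus, IH. simpl. ring.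
Qed.

Lemma exp_half_lt_2 : exp (/ 2) < 2.
Proof.
  assert (exp (/ 2) * exp (/ 2) = exp 1) by (rewrite <- exp_plus; f_equal; lra).
  pose proof exp_le_3. pose proof (exp_pos (/ 2)). nra.
Qed.

Lemma ln2_lt_1 : ln 2 < 1.
Proof.
  rewrite <- (ln_exp 1). apply ln_increasing; [lra|].
  pose proof (exp_ineq1 1 ltac:(lra)). lra.
Qed.

Lemma Cexp_add (a b : C) : Cexp (Cplus a b) = Cmult (Cexp a) (Cexp b).
Proof.
  destruct a as [a1 a2], b as [b1 b2]. unfold Cexp.
  apply injective_projections; simpl;
    rewrite exp_plus; [rewrite cos_plus | rewrite sin_plus]; ring.
Qed.

Lemma Cexp_0 : Cexp (RtoC 0) = RtoC 1.
Proof.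
  unfold Cexp. apply injective_projections; simpl; rewrite exp_0, ?cos_0, ?sin_0; ring.
Qed.

Lemma Cpow_Cexp (z : C) (k : nat) : Cpow (Cexp z) k = Cexp (Cmult (RtoC (INR k)) z).
Proof.
  induction k as [|k IH].
  - replace (Cmult (RtoC (INR 0)) z) with (RtoC 0)
      by (apply injective_projections; simpl; ring).
    now rewrite Cexp_0.
  - rewrite Cpow_S, IH, <- Cexp_add. f_equal. rewrite S_INR.
    apply injective_projections; simpl; ring.
Qed.

Lemma Cmod_Cexp (w : C) : Cmod (Cexp w) = exp (Re w).
Proof.
  unfold Cmod, Cexp. simpl.
  replace ((exp (Re w) * cos (Im w)) * ((exp (Re w) * cos (Im w)) * 1)
         + (exp (Re w) * sin (Im w)) * ((exp (Re w) * sin (Im w)) * 1))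
    with (exp (Re w) ^ 2)
    by (pose proof (sin2_cos2 (Im w)) as H; unfold Rsqr in H; simpl; nra).
  apply sqrt_pow2. left. apply exp_pos.
Qed.

Definition Cexp_term (a : C) (n : nat) : C := Cmult (RtoC (/ INR (fact n))) (Cpow a n).

Lemma Cexp_term_0 (a : C) : Cexp_term a 0 = RtoC 1.
Proof. unfold Cexp_term. apply injective_projections; simpl; field. Qed.

Lemma Cexp_term_S (a : C) (k : nat) :
  Cmult (RtoC (INR (S k))) (Cexp_term a (S k)) = Cmult a (Cexp_term a k).
Proof.
  unfold Cexp_term. rewrite Cpow_S.
  assert (Hr : INR (S k) * / INR (fact (S k)) = / INR (fact k)).
  { rewrite fact_simpl, mult_INR. field.
    split; [apply not_0_INR, fact_neq_0 | apply not_0_INR; lia]. }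
  rewrite <- Hr, RtoC_mult. ring.
Qed.

Lemma Cmod_Cexp_term (a : C) (n : nat) : Cmod (Cexp_term a n) = Cmod a ^ n / INR (fact n).
Proof.
  unfold Cexp_term. rewrite Cmod_mult, Cmod_R, Cmod_pow, Rabs_right.
  - unfold Rdiv. ring.
  - left. apply Rinv_0_lt_compat, INR_fact_lt_0.
Qed.

Lemma ex_series_Cmod_Cexp_term (a : C) : ex_series (fun n => Cmod (Cexp_term a n)).
Proof.
  exists (exp (Cmod a)). eapply is_series_ext; [|apply exp_series].
  intros n. now rewrite Cmod_Cexp_term.
Qed.

Lemma Cexp_term_convolution (a b : C) (n : nat) :
  sum_n (fun k => Cmult (Cexp_term a k) (Cexp_term b (n - k))) n = Cexp_term (Cplus a b) n.
Proof.
  induction n as [|n IH].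
  - rewrite sum_O. simpl. rewrite !Cexp_term_0. apply injective_projections; simpl; ring.
  - set (conv := fun m => sum_n (fun k => Cmult (Cexp_term a k) (Cexp_term b (m - k))) m).
    change (conv (S n) = Cexp_term (Cplus a b) (S n)).
    assert (Hn : RtoC (INR (S n)) <> RtoC 0)
      by (intros E; injection E; apply (not_0_INR (S n)); lia).
    (* Both sides u satisfy (n + 1) u (n + 1) = (a + b) u n; for the convolution split
       n + 1 = k + (n + 1 - k). *)
    apply (Cmult_reg_l _ _ _ Hn). rewrite Cexp_term_S, <- IH. fold (conv n).
    assert (Hsplit : Cmult (RtoC (INR (S n))) (conv (S n)) =
      Cplus (sum_n (fun k => Cmult (Cmult (RtoC (INR k)) (Cexp_term a k))
                               (Cexp_term b (S n - k))) (S n))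
            (sum_n (fun k => Cmult (Cexp_term a k)
                               (Cmult (RtoC (INR (S n - k))) (Cexp_term b (S n - k)))) (S n))).
    { unfold conv. rewrite <- (sum_n_mult_l (K := C_Ring)), <- (sum_n_plus (G := C_AbelianMonoid)).
      apply sum_n_ext_loc. intros k Hk.
      replace (INR (S n)) with (INR k + INR (S n - k)) by (rewrite <- plus_INR; f_equal; lia).
      rewrite RtoC_plus. C_ring. }
    assert (Hleft : sum_n (fun k => Cmult (Cmult (RtoC (INR k)) (Cexp_term a k))
                                          (Cexp_term b (S n - k))) (S n)
                    = Cmult a (conv n)).
    { rewrite sum_n_Sl. unfold conv. rewrite <- (sum_n_mult_l (K := C_Ring)).
      replace (Cmult (Cmult (RtoC (INR 0)) (Cexp_term a 0)) (Cexp_term b (S n - 0))) with (RtoC 0)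
        by (apply injective_projections; simpl; ring).
      change plus with Cplus. rewrite Cplus_0_l.
      apply sum_n_ext_loc. intros k _. simpl (S n - S k)%nat.
      rewrite Cexp_term_S. C_ring. }
    assert (Hright : sum_n (fun k => Cmult (Cexp_term a k)
                       (Cmult (RtoC (INR (S n - k))) (Cexp_term b (S n - k)))) (S n)
                     = Cmult b (conv n)).
    { rewrite sum_Sn. unfold conv. rewrite <- (sum_n_mult_l (K := C_Ring)).
      replace (S n - S n)%nat with 0%nat by lia.
      replace (Cmult (Cexp_term a (S n)) (Cmult (RtoC (INR 0)) (Cexp_term b 0))) with (RtoC 0)
        by (apply injective_projections; simpl; ring).
      change plus with Cplus. rewrite Cplus_0_r.
      apply sum_n_ext_loc. intros k Hk. replace (S n - k)%nat with (S (n - k)) by lia.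
      rewrite Cexp_term_S. C_ring. }
    rewrite Hsplit, Hleft, Hright. ring.
Qed.

Lemma cos_series (y : R) : is_series (fun m => cos_n m * (y ^ 2) ^ m) (cos y).
Proof.
  unfold cos. destruct (exist_cos (Rsqr y)) as [l Hl].
  apply is_series_Reals. replace (y ^ 2) with (Rsqr y) by (unfold Rsqr; ring). exact Hl.
Qed.

Lemma sin_series (y : R) : is_series (fun m => y * (sin_n m * (y ^ 2) ^ m)) (sin y).
Proof.
  unfold sin. destruct (exist_sin (Rsqr y)) as [l Hl].
  apply is_series_Reals in Hl. replace (y ^ 2) with (Rsqr y) by (unfold Rsqr; ring).
  apply (is_series_scal_l (V := R_NormedModule) y _ _ Hl).
Qed.

Lemma Cpow_imag_even (y : R) (m : nat) : Cpow (0, y) (2 * m) = RtoC ((- y ^ 2) ^ m).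
Proof.
  rewrite Cpow_mult_r, RtoC_pow. f_equal.
  apply injective_projections; simpl; ring.
Qed.

Lemma is_series_Cexp_term_real (x : R) : is_series (Cexp_term (RtoC x)) (RtoC (exp x)).
Proof.
  eapply is_series_ext; [|apply is_series_RtoC, exp_series].
  intros n. unfold Cexp_term. rewrite <- RtoC_pow, <- RtoC_mult. f_equal. unfold Rdiv. ring.
Qed.

Lemma is_series_Cexp_term_imag (y : R) : is_series (Cexp_term (0, y)) (cos y, sin y).
Proof.
  assert (Heven : forall m, Cexp_term (0, y) (2 * m) = RtoC (cos_n m * (y ^ 2) ^ m)).
  { intros m. unfold Cexp_term, cos_n. rewrite Cpow_imag_even, <- RtoC_mult. f_equal.
    replace (- y ^ 2) with (-1 * y ^ 2) by ring. rewrite Rpow_mult_distr. unfold Rdiv. ring. }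
  assert (Hodd : forall m, Cexp_term (0, y) (2 * m + 1) = (0, y * (sin_n m * (y ^ 2) ^ m))).
  { intros m. unfold Cexp_term, sin_n. rewrite Nat.add_1_r, Cpow_S, Cpow_imag_even.
    replace (- y ^ 2) with (-1 * y ^ 2) by ring. rewrite Rpow_mult_distr.
    apply injective_projections; simpl; unfold Rdiv; ring. }
  apply is_series_Re_Im.
  - apply (is_series_even _ (cos y)).
    + intros m. cbv beta. rewrite Hodd. reflexivity.
    + eapply is_series_ext; [|apply cos_series]. intros m. rewrite Heven. reflexivity.
  - apply (is_series_odd _ (sin y)).
    + intros m. cbv beta. rewrite Heven. reflexivity.
    + eapply is_series_ext; [|apply sin_series]. intros m. rewrite Hodd. reflexivity.
Qed.

Lemma Cexp_series (z : C) : is_series (Cexp_term z) (Cexp z).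
Proof.
  destruct z as [x y].
  pose proof (is_series_C_mult _ _ _ _ (is_series_Cexp_term_real x) (is_series_Cexp_term_imag y)
                (ex_series_Cmod_Cexp_term _) (ex_series_Cmod_Cexp_term _)) as H.
  replace (Cexp (x, y)) with (Cmult (RtoC (exp x)) (cos y, sin y))
    by (unfold Cexp; apply injective_projections; simpl; ring).
  eapply is_series_ext; [|exact H]. intros n. simpl.
  rewrite Cexp_term_convolution. f_equal. apply injective_projections; simpl; ring.
Qed.

(** * The binomial series of sqrt (1 - v) *)

Fixpoint sqrt1m_coef (n : nat) : R :=
  match n with
  | O => 1
  | S k => sqrt1m_coef k * (2 * INR k - 1) / (2 * INR k + 2)
  end.

Lemma sqrt1m_coef_S (k : nat) :
  (2 * INR k + 2) * sqrt1m_coef (S k) = (2 * INR k - 1) * sqrt1m_coef k.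
Proof. simpl. pose proof (pos_INR k). field. lra. Qed.

Lemma Rabs_sqrt1m_coef_le_1 (n : nat) : Rabs (sqrt1m_coef n) <= 1.
Proof.
  induction n as [|n IH]; simpl; [rewrite Rabs_R1; lra|].
  pose proof (pos_INR n).
  unfold Rdiv. rewrite !Rabs_mult, Rabs_inv, (Rabs_right (2 * INR n + 2)) by lra.
  assert (Rabs (2 * INR n - 1) <= 2 * INR n + 2) by (apply Rabs_le; lra).
  apply (Rmult_le_reg_r (2 * INR n + 2)); [lra|].
  rewrite Rmult_assoc, Rinv_l, Rmult_1_r by lra.
  pose proof (Rabs_pos (sqrt1m_coef n)). pose proof (Rabs_pos (2 * INR n - 1)). nra.
Qed.

Lemma sqrt1m_coef_S_nonpos (n : nat) : sqrt1m_coef (S n) <= 0.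
Proof.
  induction n as [|n IH]; [simpl; lra|].
  change (sqrt1m_coef (S (S n))) with
    (sqrt1m_coef (S n) * (2 * INR (S n) - 1) / (2 * INR (S n) + 2)).
  rewrite S_INR. pose proof (pos_INR n).
  unfold Rdiv. apply Rmult_le_0_r; [nra | left; apply Rinv_0_lt_compat; lra].
Qed.

Lemma sum_sqrt1m_coef (n : nat) : sum_f_R0 sqrt1m_coef n = - (2 * INR n + 2) * sqrt1m_coef (S n).
Proof.
  induction n as [|n IH]; [simpl; field|].
  rewrite tech5, IH.
  replace (- (2 * INR (S n) + 2) * sqrt1m_coef (S (S n)))
    with (- ((2 * INR (S n) + 2) * sqrt1m_coef (S (S n)))) by ring.
  rewrite sqrt1m_coef_S, S_INR. ring.
Qed.

Lemma sum_Rabs_sqrt1m_coef_le_1 (n : nat) :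
  sum_f_R0 (fun k => Rabs (sqrt1m_coef (S k))) n <= 1.
Proof.
  rewrite (sum_eq _ (fun k => sqrt1m_coef (S k) * -1))
    by (intros k _; rewrite Rabs_left1 by apply sqrt1m_coef_S_nonpos; ring).
  rewrite <- scal_sum.
  pose proof (sum_sqrt1m_coef (S n)) as H. rewrite decomp_sum in H by lia. simpl pred in H.
  pose proof (sqrt1m_coef_S_nonpos (S n)). pose proof (pos_INR (S n)). simpl sqrt1m_coef in H at 1.
  nra.
Qed.

Definition sqrt1m_conv (n : nat) : R :=
  sum_f_R0 (fun j => sqrt1m_coef j * sqrt1m_coef (n - j)) n.

Lemma sqrt1m_conv_S (n : nat) :
  (2 * INR n + 2) * sqrt1m_conv (S n) = (2 * INR n - 2) * sqrt1m_conv n.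
Proof.
  (* The coefficient form of (1 - v) (f^2)' = - f^2 for f = sqrt (1 - v): split
     2n + 2 = 2j + 2(n + 1 - j) and apply [sqrt1m_coef_S] to either factor. *)
  set (c := sqrt1m_coef). unfold sqrt1m_conv. fold c. rewrite !scal_sum.
  rewrite (sum_eq _ (fun j => 2 * INR j * c j * c (S n - j)%nat
                              + c j * (2 * INR (S n - j)%nat * c (S n - j)%nat))).
  2: { intros j Hj. replace (2 * INR n + 2) with (2 * INR j + 2 * INR (S n - j)%nat).
       - ring.
       - rewrite minus_INR, S_INR by lia. ring. }
  rewrite plus_sum, decomp_sum by lia. simpl pred. rewrite tech5.
  replace (S n - S n)%nat with 0%nat by lia. rewrite Nat.sub_0_r.
  rewrite (sum_eq (fun i => 2 * INR (S i) * c (S i) * c (S n - S i)%nat)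
                  (fun i => (2 * INR i - 1) * c i * c (n - i)%nat)).
  2: { intros i _. rewrite S_INR. simpl (S n - S i)%nat.
       unfold c. rewrite <- sqrt1m_coef_S. ring. }
  rewrite (sum_eq (fun j => c j * (2 * INR (S n - j)%nat * c (S n - j)%nat))
                  (fun j => (2 * INR (n - j) - 1) * c j * c (n - j)%nat)).
  2: { intros j Hj. replace (S n - j)%nat with (S (n - j)) by lia. rewrite S_INR.
       replace (2 * (INR (n - j) + 1)) with (2 * INR (n - j) + 2) by ring.
       unfold c. rewrite Rmult_assoc, sqrt1m_coef_S. ring. }
  simpl INR. rewrite !Rmult_0_r, !Rmult_0_l, Rmult_0_r, Rplus_0_l, Rplus_0_r, <- plus_sum.
  apply sum_eq. intros i Hi. rewrite minus_INR by lia. ring.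
Qed.

Lemma sqrt1m_conv_0 : sqrt1m_conv 0 = 1.
Proof. unfold sqrt1m_conv. simpl. ring. Qed.

Lemma sqrt1m_conv_1 : sqrt1m_conv 1 = -1.
Proof. unfold sqrt1m_conv. simpl. field. Qed.

Lemma sqrt1m_conv_SS (n : nat) : sqrt1m_conv (S (S n)) = 0.
Proof.
  induction n as [|n IH].
  - pose proof (sqrt1m_conv_S 1) as H. simpl INR in H. lra.
  - pose proof (sqrt1m_conv_S (S (S n))) as H. rewrite IH, Rmult_0_r in H.
    pose proof (pos_INR (S (S n))). apply Rmult_integral in H as [H | H]; [lra | exact H].
Qed.

Definition sqrt1m_term (v : C) (k : nat) : C := Cmult (RtoC (sqrt1m_coef k)) (Cpow v k).

Definition sqrt1m (v : C) : C := CSeries (sqrt1m_term v).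

Lemma Cmod_sqrt1m_term_le (v : C) (k : nat) : Cmod (sqrt1m_term v k) <= Cmod v ^ k.
Proof.
  unfold sqrt1m_term. rewrite Cmod_mult, Cmod_R, Cmod_pow.
  pose proof (Rabs_sqrt1m_coef_le_1 k). pose proof (pow_le (Cmod v) k (Cmod_ge_0 v)). nra.
Qed.

Lemma ex_series_Cmod_sqrt1m_term (v : C) :
  Cmod v < 1 -> ex_series (fun k => Cmod (sqrt1m_term v k)).
Proof.
  intros Hv. apply (ex_series_Rle _ (fun k => Cmod v ^ k)).
  - intros k. rewrite Rabs_right by apply Rle_ge, Cmod_ge_0. apply Cmod_sqrt1m_term_le.
  - apply ex_series_geom. rewrite Rabs_right by apply Rle_ge, Cmod_ge_0. exact Hv.
Qed.

Lemma is_series_sqrt1m (v : C) : Cmod v < 1 -> is_series (sqrt1m_term v) (sqrt1m v).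
Proof. intros Hv. apply is_series_CSeries, ex_series_Cmod_sqrt1m_term, Hv. Qed.

Lemma sqrt1m_sq (v : C) : Cmod v < 1 -> Cmult (sqrt1m v) (sqrt1m v) = Cminus (RtoC 1) v.
Proof.
  intros Hv.
  pose proof (is_series_sqrt1m v Hv) as HS. pose proof (ex_series_Cmod_sqrt1m_term v Hv) as ES.
  apply (is_series_C_unique (fun n => Cmult (RtoC (sqrt1m_conv n)) (Cpow v n))).
  - eapply is_series_ext; [|exact (is_series_C_mult _ _ _ _ HS HS ES ES)]. intros n.
    unfold sqrt1m_conv. rewrite <- sum_n_Cmult_RtoC.
    apply sum_n_ext_loc. intros k Hk. unfold sqrt1m_term.
    replace (Cpow v n) with (Cmult (Cpow v k) (Cpow v (n - k)))
      by (rewrite <- Cpow_add_r; f_equal; lia).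
    rewrite RtoC_mult. C_ring.
  - replace (Cminus (RtoC 1) v)
      with (Cplus (Cmult (RtoC (sqrt1m_conv 0)) (Cpow v 0))
                  (Cmult (RtoC (sqrt1m_conv 1)) (Cpow v 1)))
      by (rewrite sqrt1m_conv_0, sqrt1m_conv_1; apply injective_projections; simpl; ring).
    apply is_series_C_two_terms. intros n. rewrite sqrt1m_conv_SS.
    apply injective_projections; simpl; ring.
Qed.

Lemma Re_sqrt1m_ge (v : C) : Cmod v < 1 -> 1 - Cmod v <= Re (sqrt1m v).
Proof.
  intros Hv. set (r := Cmod v) in *. assert (Hr : 0 <= r) by apply Cmod_ge_0.
  set (b := fun k => Rabs (sqrt1m_coef (S k)) * r ^ S k).
  assert (Hrk : forall k, 0 <= r ^ S k <= r).
  { intros k. simpl. pose proof (pow_le r k Hr).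
    assert (r ^ k <= 1) by (rewrite <- (pow1 k); apply pow_incr; lra). split; nra. }
  assert (Eb : ex_series b).
  { apply (ex_series_Rle _ (fun k => r ^ S k)).
    - intros k. unfold b.
      rewrite Rabs_mult, Rabs_Rabsolu, (Rabs_right (r ^ S k)) by apply Rle_ge, Hrk.
      pose proof (Rabs_sqrt1m_coef_le_1 (S k)). pose proof (Hrk k). nra.
    - apply (ex_series_incr_1 (fun k => r ^ k)), ex_series_geom. rewrite Rabs_right; lra. }
  assert (Hb : Series b <= r).
  { apply (is_lim_seq_le (sum_f_R0 b) (fun _ => r) (Series b) r);
      [| apply is_series_partial_sums, Series_correct, Eb | apply is_lim_seq_const].
    intros N. apply Rle_trans with (r * sum_f_R0 (fun k => Rabs (sqrt1m_coef (S k))) N).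
    - rewrite scal_sum. apply sum_Rle. intros k _. unfold b.
      apply Rmult_le_compat_l; [apply Rabs_pos | apply Hrk].
    - pose proof (sum_Rabs_sqrt1m_coef_le_1 N). nra. }
  assert (Ere : ex_series (fun k => Re (sqrt1m_term v k))).
  { apply ex_series_Rabs, (ex_series_Rabs_le _ _ (fun n => re_le_Cmod _)).
    apply ex_series_Cmod_sqrt1m_term, Hv. }
  assert (Htail : Rabs (Series (fun k => Re (sqrt1m_term v (S k)))) <= Series b).
  { apply Rabs_Series_le; [|exact Eb]. intros k. eapply Rle_trans; [apply re_le_Cmod|].
    unfold sqrt1m_term, b, r. rewrite Cmod_mult, Cmod_R, Cmod_pow. apply Rle_refl. }
  change (Re (sqrt1m v)) with (Series (fun k => Re (sqrt1m_term v k))).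
  rewrite Series_incr_1 by exact Ere.
  replace (Re (sqrt1m_term v 0)) with 1 by (unfold sqrt1m_term; simpl; ring).
  pose proof (Rle_abs (- Series (fun k => Re (sqrt1m_term v (S k))))) as Hle.
  rewrite Rabs_Ropp in Hle. lra.
Qed.

(** * Falling factorials and Stirling numbers *)

Fixpoint falling (x : R) (j : nat) : R :=
  match j with
  | O => 1
  | S i => falling x i * (x - INR i)
  end.

Lemma falling_S_l (x : R) (j : nat) : falling x (S j) = x * falling (x - 1) j.
Proof.
  revert x. induction j as [|j IH]; intros x; [simpl; ring|].
  change (falling x (S (S j))) with (falling x (S j) * (x - INR (S j))).
  rewrite IH, S_INR. simpl. ring.
Qed.

Lemma Rabs_falling_le (k j : nat) : Rabs (falling (/ 2 - INR k) j) <= (INR k + INR j + 1) ^ j.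
Proof.
  induction j as [|j IH]; [simpl; rewrite Rabs_R1; lra|].
  simpl falling. rewrite Rabs_mult, S_INR, Rmult_comm. simpl pow.
  pose proof (pos_INR k). pose proof (pos_INR j).
  assert (Rabs (/ 2 - INR k - INR j) <= INR k + (INR j + 1) + 1) by (apply Rabs_le; lra).
  assert ((INR k + INR j + 1) ^ j <= (INR k + (INR j + 1) + 1) ^ j) by (apply pow_incr; lra).
  apply Rmult_le_compat; [apply Rabs_pos | apply Rabs_pos | assumption | lra].
Qed.

Lemma stirling2_gt (n k : nat) : (n < k)%nat -> stirling2 n k = 0%nat.
Proof.
  revert k. induction n as [|n IH]; intros [|k] Hk; try lia; [reflexivity|].
  simpl. rewrite !IH by lia. lia.
Qed.

Lemma stirling2_SS (n i : nat) :
  INR (stirling2 (S n) (S i)) = INR (S i) * INR (stirling2 n (S i)) + INR (stirling2 n i).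
Proof. cbn [stirling2]. now rewrite plus_INR, mult_INR. Qed.

Lemma pow_falling_le (x : R) (n m : nat) : (n <= m)%nat ->
  x ^ n = sum_f_R0 (fun j => INR (stirling2 n j) * falling x j) m.
Proof.
  revert m. induction n as [|n IH]; intros m Hm.
  - induction m as [|m IHm]; [simpl; ring|].
    rewrite tech5, <- IHm by lia. simpl. ring.
  - destruct m as [|m]; [lia|].
    rewrite <- tech_pow_Rmult, (IH (S m)), scal_sum by lia.
    transitivity (sum_f_R0 (fun j => INR (stirling2 n j) * falling x (S j)) (S m)
                  + sum_f_R0 (fun j => INR j * INR (stirling2 n j) * falling x j) (S m)).
    { rewrite <- plus_sum. apply sum_eq. intros j _. simpl falling. ring. }
    rewrite (tech5 (fun j => INR (stirling2 n j) * falling x (S j))), (stirling2_gt n (S m)) by lia.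
    rewrite !(decomp_sum _ (S m)) by lia. simpl pred.
    simpl (stirling2 (S n) 0). simpl (INR 0).
    rewrite (sum_eq (fun i => INR (stirling2 (S n) (S i)) * falling x (S i))
                    (fun i => INR (stirling2 n i) * falling x (S i)
                              + INR (S i) * INR (stirling2 n (S i)) * falling x (S i)))
      by (intros i _; rewrite stirling2_SS; ring).
    rewrite plus_sum. ring.
Qed.

Lemma pow_falling (x : R) (n : nat) :
  x ^ n = sum_f_R0 (fun j => INR (stirling2 n j) * falling x j) n.
Proof. apply pow_falling_le. lia. Qed.

(** * The coefficients p_k and their moments *)

Definition p_coef (k : nat) : R := sqrt 2 * sqrt1m_coef k * (/ 2) ^ k.

Lemma Rabs_p_coef_le (k : nat) : Rabs (p_coef k) <= sqrt 2 * (/ 2) ^ k.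
Proof.
  unfold p_coef. rewrite !Rabs_mult.
  rewrite (Rabs_right (sqrt 2)) by (apply Rle_ge, Rlt_le, Rlt_sqrt2_0).
  rewrite (Rabs_right ((/ 2) ^ k)) by (apply Rle_ge, pow_le; lra).
  pose proof (Rabs_sqrt1m_coef_le_1 k) as Hc. pose proof Rlt_sqrt2_0.
  pose proof (pow_le (/ 2) k ltac:(lra)).
  replace (sqrt 2 * Rabs (sqrt1m_coef k) * (/ 2) ^ k)
    with (sqrt 2 * (/ 2) ^ k * Rabs (sqrt1m_coef k)) by ring.
  rewrite <- (Rmult_1_r (sqrt 2 * (/ 2) ^ k)) at 2.
  apply Rmult_le_compat_l; [apply Rmult_le_pos; lra | exact Hc].
Qed.

Lemma p_coef_S (k : nat) : p_coef k * (/ 2 - INR k) = -2 * (INR k + 1) * p_coef (S k).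
Proof.
  unfold p_coef. simpl pow.
  replace (-2 * (INR k + 1) * (sqrt 2 * sqrt1m_coef (S k) * (/ 2 * (/ 2) ^ k)))
    with (- sqrt 2 * (/ 2) ^ k * / 2 * ((2 * INR k + 2) * sqrt1m_coef (S k))) by field.
  rewrite sqrt1m_coef_S. field.
Qed.

Lemma ex_series_p_coef_exp (rho : R) : 0 <= rho -> exp rho < 2 ->
  ex_series (fun k => Rabs (p_coef k) * exp ((INR k + / 2) * rho)).
Proof.
  intros Hrho H2.
  apply (ex_series_Rle _ (fun k => sqrt 2 * exp (/ 2 * rho) * (exp rho / 2) ^ k)).
  - intros k. pose proof (exp_pos ((INR k + / 2) * rho)).
    rewrite Rabs_right by (apply Rle_ge, Rmult_le_pos; [apply Rabs_pos | lra]).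
    replace ((INR k + / 2) * rho) with (INR k * rho + / 2 * rho) by ring.
    rewrite exp_plus, exp_mult_INR. unfold Rdiv. rewrite Rpow_mult_distr.
    pose proof (Rabs_p_coef_le k) as Hp. pose proof (exp_pos (/ 2 * rho)).
    pose proof (pow_le (exp rho) k (Rlt_le _ _ (exp_pos rho))).
    replace (sqrt 2 * exp (/ 2 * rho) * (exp rho ^ k * (/ 2) ^ k))
      with ((sqrt 2 * (/ 2) ^ k) * (exp rho ^ k * exp (/ 2 * rho))) by ring.
    apply Rmult_le_compat_r; [apply Rmult_le_pos; lra | exact Hp].
  - apply (ex_series_scal_l (V := R_NormedModule)), ex_series_geom.
    pose proof (exp_pos rho). rewrite Rabs_right; lra.
Qed.

Lemma ex_series_p_coef_pow (c : R) (m : nat) : 0 <= c ->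
  ex_series (fun k => Rabs (p_coef k) * (INR k + c) ^ m).
Proof.
  intros Hc. set (K := 2 ^ m * INR (fact m) * exp ((c - / 2) / 2)).
  apply (ex_series_Rle _ (fun k => K * (Rabs (p_coef k) * exp ((INR k + / 2) * / 2)))).
  - intros k. pose proof (pos_INR k).
    rewrite Rabs_right by (apply Rle_ge, Rmult_le_pos; [apply Rabs_pos | apply pow_le; lra]).
    assert (Hsplit : exp ((INR k + c) / 2) = exp ((c - / 2) / 2) * exp ((INR k + / 2) * / 2))
      by (rewrite <- exp_plus; f_equal; field).
    replace (K * (Rabs (p_coef k) * exp ((INR k + / 2) * / 2)))
      with (Rabs (p_coef k) * (2 ^ m * INR (fact m) * exp ((INR k + c) / 2)))
      by (rewrite Hsplit; unfold K; ring).
    apply Rmult_le_compat_l; [apply Rabs_pos | apply pow_le_exp; lra].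
  - apply (ex_series_scal_l (V := R_NormedModule)), ex_series_p_coef_exp;
      [lra | apply exp_half_lt_2].
Qed.

Lemma ex_series_p_coef_falling (j : nat) : ex_series (fun k => p_coef k * falling (/ 2 - INR k) j).
Proof.
  apply (ex_series_Rle _ (fun k => Rabs (p_coef k) * (INR k + (INR j + 1)) ^ j)).
  - intros k. rewrite Rabs_mult. apply Rmult_le_compat_l; [apply Rabs_pos|].
    replace (INR k + (INR j + 1)) with (INR k + INR j + 1) by ring. apply Rabs_falling_le.
  - apply ex_series_p_coef_pow. pose proof (pos_INR j). lra.
Qed.

Definition falling_moment (j : nat) : R := Series (fun k => p_coef k * falling (/ 2 - INR k) j).

Lemma falling_moment_S (j : nat) : falling_moment (S j) = (1 - 2 * INR j) * falling_moment j.
Proof.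
  (* Summation by parts: [p_coef_S] moves the factor 1/2 - k of the falling factorial
     onto p_(k+1). *)
  set (h := fun k => INR k * p_coef k * falling (/ 2 - INR k) j).
  assert (Hshift : falling_moment (S j) = -2 * Series h).
  { unfold falling_moment. rewrite (Series_incr_1_aux h) by (unfold h; simpl; ring).
    rewrite <- Series_scal_l. apply Series_ext. intros k.
    rewrite falling_S_l. unfold h.
    replace (/ 2 - INR k - 1) with (/ 2 - INR (S k)) by (rewrite S_INR; ring).
    transitivity ((p_coef k * (/ 2 - INR k)) * falling (/ 2 - INR (S k)) j); [ring|].
    rewrite p_coef_S, S_INR. ring. }
  assert (Hdirect : Series h = (/ 2 - INR j) * falling_moment j - falling_moment (S j)).
  { unfold falling_moment. rewrite <- Series_scal_l, <- Series_minus.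
    - apply Series_ext. intros k. unfold h. simpl falling. ring.
    - apply (ex_series_scal_l (V := R_NormedModule)), ex_series_p_coef_falling.
    - apply ex_series_p_coef_falling. }
  rewrite Hdirect in Hshift. lra.
Qed.

Lemma falling_moment_0 : falling_moment 0 = 1.
Proof.
  set (v := RtoC (/ 2)).
  assert (Hv : Cmod v = / 2) by (unfold v; rewrite Cmod_R, Rabs_right; lra).
  assert (Hv1 : Cmod v < 1) by lra.
  assert (Hterm : forall k, sqrt1m_term v k = RtoC (sqrt1m_coef k * (/ 2) ^ k)).
  { intros k. unfold sqrt1m_term, v. now rewrite <- RtoC_pow, <- RtoC_mult. }
  assert (Him : Im (sqrt1m v) = 0).
  { change (Im (sqrt1m v)) with (Series (fun k => Im (sqrt1m_term v k))).
    rewrite (Series_ext _ (fun k => 0 * 0)) by (intros k; rewrite Hterm; simpl; ring).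
    rewrite Series_scal_l. ring. }
  assert (Hre : falling_moment 0 = sqrt 2 * Re (sqrt1m v)).
  { unfold falling_moment. change (Re (sqrt1m v)) with (Series (fun k => Re (sqrt1m_term v k))).
    rewrite <- Series_scal_l. apply Series_ext. intros k.
    rewrite Hterm. unfold p_coef. simpl. ring. }
  assert (Hsq : Re (sqrt1m v) * Re (sqrt1m v) = / 2).
  { pose proof (f_equal Re (sqrt1m_sq v Hv1)) as Hre2.
    destruct (sqrt1m v) as [s1 s2]. simpl in Him, Hre2 |- *. subst s2.
    unfold v in Hre2. simpl in Hre2. lra. }
  pose proof (Re_sqrt1m_ge v Hv1) as Hpos. rewrite Hv in Hpos.
  pose proof (sqrt_sqrt 2 ltac:(lra)) as H2. pose proof Rlt_sqrt2_0.
  rewrite Hre. set (s := Re (sqrt1m v)) in *.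
  assert ((sqrt 2 * s) * (sqrt 2 * s) = 1)
    by (transitivity ((sqrt 2 * sqrt 2) * (s * s)); [ring | rewrite H2, Hsq; field]).
  nra.
Qed.

Lemma dfact_odd_m3 : dfact_odd (-3) = -1.
Proof. unfold dfact_odd. simpl. field. Qed.

Lemma dfact_odd_S (j : nat) : dfact_odd (2 * Z.of_nat (S j) - 3) = odd_dfact j.
Proof.
  destruct j as [|j]; [unfold dfact_odd; simpl; field|].
  unfold dfact_odd.
  replace (2 * Z.of_nat (S (S j)) - 3)%Z with (2 * Z.of_nat (S j) - 1)%Z by lia.
  replace (0 <=? 2 * Z.of_nat (S j) - 1)%Z with true by (symmetry; apply Z.leb_le; lia).
  replace (2 * Z.of_nat (S j) - 1 + 1)%Z with (Z.of_nat (S j) * 2)%Z by lia.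
  now rewrite Z.div_mul, Nat2Z.id by lia.
Qed.

Lemma falling_moment_closed (j : nat) :
  falling_moment j = (-1) ^ (j + 1) * dfact_odd (2 * Z.of_nat j - 3).
Proof.
  induction j as [|j IH].
  - rewrite falling_moment_0. change (2 * Z.of_nat 0 - 3)%Z with (-3)%Z.
    rewrite dfact_odd_m3. simpl. ring.
  - rewrite falling_moment_S, IH, dfact_odd_S. destruct j as [|j].
    + change (2 * Z.of_nat 0 - 3)%Z with (-3)%Z. rewrite dfact_odd_m3. simpl. ring.
    + rewrite dfact_odd_S. simpl odd_dfact. rewrite S_INR, !plus_INR, !pow_add. simpl. ring.
Qed.

Definition exp_moment (n : nat) : R := Series (fun k => p_coef k * (INR k - / 2) ^ n).

Lemma exp_moment_coef3p3 (n : nat) : exp_moment n = coef3p3 n.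
Proof.
  set (f := fun j k => INR (stirling2 n j) * (p_coef k * falling (/ 2 - INR k) j)).
  assert (Hf : forall j, is_series (f j) (INR (stirling2 n j) * falling_moment j)).
  { intros j. apply (is_series_scal_l (V := R_NormedModule)), Series_correct.
    apply ex_series_p_coef_falling. }
  unfold exp_moment, coef3p3.
  rewrite (Series_ext _ (fun k => (-1) ^ n * sum_f_R0 (fun j => f j k) n)).
  2: { intros k. replace (INR k - / 2) with (-1 * (/ 2 - INR k)) by ring.
       rewrite Rpow_mult_distr, (pow_falling (/ 2 - INR k) n).
       rewrite <- Rmult_assoc, (Rmult_comm (p_coef k)), Rmult_assoc, scal_sum.
       f_equal. apply sum_eq. intros j _. unfold f. ring. }
  rewrite Series_scal_l, (is_series_unique _ _ (is_series_sum_f_R0 f _ n Hf)).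
  rewrite pow_add, !scal_sum. apply sum_eq. intros j _.
  rewrite falling_moment_closed, pow_add. ring.
Qed.

Lemma is_series_exp_moment (z : C) (L : C) : exp (Cmod z) < 2 ->
  is_series (fun k => Cmult (RtoC (p_coef k)) (Cexp (Cmult (RtoC (INR k - / 2)) z))) L ->
  is_series (fun n => Cmult (RtoC (exp_moment n / INR (fact n))) (Cpow z n)) L.
Proof.
  intros Hz HL.
  apply (is_series_C_interchange
           (fun k n => Cmult (RtoC (p_coef k)) (Cexp_term (Cmult (RtoC (INR k - / 2)) z) n))
           (fun k n => Rabs (p_coef k) * (((INR k + / 2) * Cmod z) ^ n / INR (fact n)))
           (fun k => Rabs (p_coef k) * exp ((INR k + / 2) * Cmod z))
           (fun k => Cmult (RtoC (p_coef k)) (Cexp (Cmult (RtoC (INR k - / 2)) z)))).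
  - intros k n. rewrite Cmod_mult, Cmod_R, Cmod_Cexp_term.
    apply Rmult_le_compat_l; [apply Rabs_pos|].
    unfold Rdiv. apply Rmult_le_compat_r; [left; apply Rinv_0_lt_compat, INR_fact_lt_0|].
    apply pow_incr. split; [apply Cmod_ge_0|]. rewrite Cmod_mult, Cmod_R.
    apply Rmult_le_compat_r; [apply Cmod_ge_0|]. pose proof (pos_INR k). apply Rabs_le. lra.
  - intros k. apply (is_series_scal_l (V := R_NormedModule)), exp_series.
  - apply ex_series_p_coef_exp; [apply Cmod_ge_0 | exact Hz].
  - intros k. apply (is_series_scal_l (V := C_NormedModule)), Cexp_series.
  - exact HL.
  - intros n.
    assert (Hd : is_series (fun k => p_coef k * (INR k - / 2) ^ n) (exp_moment n)).
    { apply Series_correct, (ex_series_Rle _ (fun k => Rabs (p_coef k) * (INR k + / 2) ^ n)).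
      - intros k. rewrite Rabs_mult, <- RPow_abs. apply Rmult_le_compat_l; [apply Rabs_pos|].
        apply pow_incr. pose proof (pos_INR k). split; [apply Rabs_pos | apply Rabs_le; lra].
      - apply ex_series_p_coef_pow. lra. }
    replace (Cmult (RtoC (exp_moment n / INR (fact n))) (Cpow z n))
      with (Cmult (Cmult (RtoC (/ INR (fact n))) (Cpow z n)) (RtoC (exp_moment n)))
      by (unfold Rdiv; rewrite RtoC_mult; ring).
    eapply is_series_ext; [|apply (is_series_scal_l (V := C_NormedModule)), is_series_RtoC, Hd].
    intros k. unfold Cexp_term. rewrite Cpow_mult_l, <- RtoC_pow, !RtoC_mult. C_ring.
Qed.

(** * The principal branch *)

Lemma cos_ge_quadratic (y : R) : -2 <= y <= 2 -> 1 - y ^ 2 / 2 <= cos y.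
Proof.
  intros Hy. destruct (pre_cos_bound y 0) as [H _]; [lra | lra|].
  unfold cos_approx, cos_term in H. simpl in H. lra.
Qed.

Lemma cos_gt_Rabs_sin (u : R) : Rabs u < / 2 -> Rabs (sin u) < cos u.
Proof.
  intros Hu. apply Rabs_def2 in Hu. pose proof (cos_ge_quadratic u ltac:(lra)) as Hcos.
  assert (7 / 8 <= cos u) by nra.
  pose proof (sin2_cos2 u) as Hpyth. unfold Rsqr in Hpyth. apply Rabs_def1; nra.
Qed.

Lemma two_exp_cos_sub_1_pos (x y : R) : x ^ 2 + y ^ 2 < ln 2 ^ 2 -> 0 < 2 * (exp (- x) * cos y) - 1.
Proof.
  (* With t = ln 2 - x >= 0: e^(-x) = e^t / 2 and y^2 < 2 t ln 2 - t^2, and the product of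
     the quadratic lower bounds for e^t and cos y exceeds 1 because ln 2 < 1. *)
  intros H. pose proof ln2_lt_1. pose proof ln_lt_2. set (L := ln 2) in *.
  assert (HxL : x < L) by nra.
  set (t := L - x). assert (Ht : 0 <= t) by (unfold t; lra).
  assert (HE : exp (- x) = exp t / 2)
    by (unfold t, L; rewrite Rminus_def, exp_plus, exp_ln by lra; field).
  pose proof (exp_ge_quadratic t Ht). pose proof (cos_ge_quadratic y ltac:(nra)).
  assert (Hy2 : y ^ 2 < 2 * L * t - t ^ 2) by (unfold t; nra).
  assert (Hpoly : 2 <= (1 + t + t ^ 2 / 2) * (2 - 2 * L * t + t ^ 2)).
  { assert (0 <= (2 - 2 * L) * t) by nra. assert (0 <= (2 - 2 * L) * t ^ 2) by nra.
    assert (0 <= (1 - L) * t ^ 3) by (apply Rmult_le_pos; [lra | apply pow_le; lra]).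
    assert (0 <= t ^ 4) by (apply pow_le; lra).
    replace ((1 + t + t ^ 2 / 2) * (2 - 2 * L * t + t ^ 2)) with
      (2 + (2 - 2 * L) * t + (2 - 2 * L) * t ^ 2 + (1 - L) * t ^ 3 + t ^ 4 / 2) by field. lra. }
  rewrite HE. pose proof (exp_pos t).
  assert (exp t * (2 - y ^ 2) > exp t * (2 - 2 * L * t + t ^ 2)) by (apply Rmult_lt_compat_l; lra).
  assert (exp t * (2 - 2 * L * t + t ^ 2) >= (1 + t + t ^ 2 / 2) * (2 - 2 * L * t + t ^ 2))
    by (apply Rle_ge, Rmult_le_compat_r; nra).
  nra.
Qed.

Lemma Re_Cmult_pos (c s : C) :
  Rabs (Im c) < Re c -> 0 < Re s -> 0 < Re (Cmult (Cmult c s) (Cmult c s)) -> 0 < Re (Cmult c s).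
Proof.
  destruct c as [c1 c2], s as [s1 s2]. simpl. intros Hc Hs Hsq.
  set (g1 := c1 * s1 - c2 * s2) in *. set (g2 := c1 * s2 + c2 * s1) in *.
  (* Re (conj c * c s) = |c|^2 Re s > 0, which fails if Re (c s) <= 0, since then
     |Im (c s)| < - Re (c s) while |Im c| < Re c. *)
  assert (K : g1 * c1 + g2 * c2 = (c1 ^ 2 + c2 ^ 2) * s1) by (unfold g1, g2; ring).
  apply Rabs_def2 in Hc. destruct (Rle_lt_dec g1 0) as [Hg | Hg]; [exfalso | exact Hg].
  assert (0 < (c1 ^ 2 + c2 ^ 2) * s1) by (apply Rmult_lt_0_compat; nra).
  assert (Habs : Rabs g2 < - g1) by (apply Rabs_def1; nra).
  apply Rabs_def2 in Habs. nra.
Qed.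

Lemma Csqrt_sq (g : C) : 0 < Re g -> Csqrt (Cmult g g) = g.
Proof.
  destruct g as [g1 g2]. simpl. intros Hg. unfold Csqrt.
  assert (Hm : Cmod (Cmult (g1, g2) (g1, g2)) = g1 ^ 2 + g2 ^ 2).
  { unfold Cmod. simpl.
    replace ((g1 * g1 - g2 * g2) * ((g1 * g1 - g2 * g2) * 1)
             + (g1 * g2 + g2 * g1) * ((g1 * g2 + g2 * g1) * 1))
      with ((g1 ^ 2 + g2 ^ 2) ^ 2) by ring.
    apply sqrt_pow2. nra. }
  rewrite Hm. unfold Re, Im. simpl fst; simpl snd.
  replace ((g1 ^ 2 + g2 ^ 2 + (g1 * g1 - g2 * g2)) / 2) with (g1 ^ 2) by field.
  replace ((g1 ^ 2 + g2 ^ 2 - (g1 * g1 - g2 * g2)) / 2) with (g2 ^ 2) by field.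
  rewrite sqrt_pow2 by lra. f_equal.
  destruct (Rle_dec 0 (g1 * g2 + g2 * g1)).
  - assert (0 <= g2) by nra. rewrite sqrt_pow2; lra.
  - assert (g2 < 0) by nra. replace (g2 ^ 2) with ((- g2) ^ 2) by ring. rewrite sqrt_pow2; lra.
Qed.

Definition sqrt_branch (z : C) : C :=
  Cmult (Cmult (RtoC (sqrt 2)) (Cexp (Cmult (RtoC (- / 2)) z)))
        (sqrt1m (Cmult (RtoC (/ 2)) (Cexp z))).

Lemma Cmod_half_Cexp_lt_1 (z : C) : Re z < ln 2 -> Cmod (Cmult (RtoC (/ 2)) (Cexp z)) < 1.
Proof.
  intros Hz. rewrite Cmod_mult, Cmod_R, Cmod_Cexp, Rabs_right by lra.
  pose proof (exp_increasing _ _ Hz) as Hexp. rewrite exp_ln in Hexp by lra. lra.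
Qed.

Lemma sqrt_branch_sq (z : C) : Re z < ln 2 ->
  Cmult (sqrt_branch z) (sqrt_branch z) = Cminus (Cmult (RtoC 2) (Cexp (Copp z))) (RtoC 1).
Proof.
  intros Hz. unfold sqrt_branch.
  set (u := Cexp (Cmult (RtoC (- / 2)) z)). set (v := Cmult (RtoC (/ 2)) (Cexp z)).
  assert (Huu : Cmult u u = Cexp (Copp z)).
  { unfold u. rewrite <- Cexp_add. f_equal. apply injective_projections; simpl; field. }
  assert (Hez : Cmult (Cexp (Copp z)) (Cexp z) = RtoC 1).
  { rewrite <- Cexp_add, <- Cexp_0. f_equal. apply injective_projections; simpl; ring. }
  transitivity (Cmult (Cmult (RtoC (sqrt 2 * sqrt 2)) (Cmult u u)) (Cmult (sqrt1m v) (sqrt1m v)));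
    [rewrite RtoC_mult; ring|].
  rewrite sqrt_sqrt, Huu, sqrt1m_sq by (lra || apply Cmod_half_Cexp_lt_1, Hz).
  rewrite <- Hez at 2. unfold v. destruct (Cexp (Copp z)), (Cexp z).
  apply injective_projections; simpl; field.
Qed.

Lemma Re_sqrt_branch_pos (z : C) : Cmod z < ln 2 -> 0 < Re (sqrt_branch z).
Proof.
  intros Hz. destruct z as [x y].
  assert (Hxy : x ^ 2 + y ^ 2 < ln 2 ^ 2).
  { pose proof (Cmod2_alt (x, y)). pose proof (Cmod_ge_0 (x, y)). simpl in *. nra. }
  assert (Hx : Re (x, y) < ln 2) by (simpl; pose proof ln_lt_2; nra).
  set (c := Cmult (RtoC (sqrt 2)) (Cexp (Cmult (RtoC (- / 2)) (x, y)))).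
  set (s := sqrt1m (Cmult (RtoC (/ 2)) (Cexp (x, y)))).
  assert (Hc : Rabs (Im c) < Re c).
  { assert (Hy : Rabs (- / 2 * y) < / 2).
    { pose proof ln2_lt_1. pose proof ln_lt_2. assert (Rabs y < 1) by (apply Rabs_def1; nra).
      rewrite Rabs_mult, Rabs_left by lra. lra. }
    pose proof (cos_gt_Rabs_sin _ Hy). pose proof Rlt_sqrt2_0. pose proof (exp_pos (- / 2 * x)).
    unfold c, Cexp. simpl. replace (- / 2 * x - 0 * y) with (- / 2 * x) by ring.
    replace (- / 2 * y + 0 * x) with (- / 2 * y) by ring.
    rewrite !Rmult_0_l, Rplus_0_r, Rminus_0_r, !Rabs_mult.
    rewrite (Rabs_right (sqrt 2)), (Rabs_right (exp _)) by lra.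
    apply Rmult_lt_compat_l; [lra|]. apply Rmult_lt_compat_l; lra. }
  assert (Hs : 0 < Re s).
  { pose proof (Cmod_half_Cexp_lt_1 _ Hx) as Hv.
    pose proof (Re_sqrt1m_ge _ Hv). unfold s. lra. }
  apply (Re_Cmult_pos c s Hc Hs).
  change (Cmult c s) with (sqrt_branch (x, y)). rewrite (sqrt_branch_sq _ Hx).
  simpl. unfold Cexp. simpl. rewrite cos_neg.
  pose proof (two_exp_cos_sub_1_pos x y Hxy). lra.
Qed.

Lemma is_series_sqrt_branch (z : C) : Re z < ln 2 ->
  is_series (fun k => Cmult (RtoC (p_coef k)) (Cexp (Cmult (RtoC (INR k - / 2)) z)))
    (sqrt_branch z).
Proof.
  intros Hz. unfold sqrt_branch.
  eapply is_series_ext;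
    [|apply (is_series_scal_l (V := C_NormedModule)), is_series_sqrt1m, Cmod_half_Cexp_lt_1, Hz].
  intros k. unfold sqrt1m_term, p_coef.
  replace (Cmult (RtoC (INR k - / 2)) z)
    with (Cplus (Cmult (RtoC (- / 2)) z) (Cmult (RtoC (INR k)) z)) by (apply injective_projections; simpl; ring).
  rewrite Cexp_add, <- Cpow_Cexp, Cpow_mult_l, <- RtoC_pow, !RtoC_mult. C_ring.
Qed.

Theorem theorem3p3 (z : C) (hz : Cmod z < ln 2) :
  is_series (fun n : nat => Cmult (RtoC (coef3p3 n / INR (fact n))) (Cpow z n))
    (Csqrt (Cminus (Cmult (RtoC 2) (Cexp (Copp z))) (RtoC 1))).
Proof.
  assert (Hre : Re z < ln 2) by (pose proof (re_le_Cmod z); pose proof (Rle_abs (Re z)); lra).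
  rewrite <- (sqrt_branch_sq z Hre), Csqrt_sq by apply (Re_sqrt_branch_pos z hz).
  eapply is_series_ext; [|apply is_series_exp_moment, is_series_sqrt_branch, Hre].
  - intros n. simpl. now rewrite exp_moment_coef3p3.
  - rewrite <- (exp_ln 2) by lra. apply exp_increasing, hz.
Qed.
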